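(* Let $K$ be a finite set with $|K|\ge2$ and $X=2^K$, and let $f^{\mathcal{W}}:\mathcal{P}^n\to 2^K$ be a non-dictatorial voting by committees with committees $\mathcal{W}=\{\mathcal{W}_k\}_{k\in K}$. Then $f^{\mathcal{W}}$ is NOM if and only if for each $k\in K$: (i) $\bigcap_{M\in\mathcal{W}_k}M=\emptyset$, and (ii) $|M|\ge2$ for each $M\in\mathcal{W}_k$.
   Context: $N=\{1,\dots,n\}$, $n\ge2$. Alternatives are subsets of $K$; $\mathcal{P}$ is the set of all strict linear orders on $2^K$ (not necessarily separable); $t(P_i)\subseteq K$ is the top of $P_i$. A committee for $k$ is a non-empty set $\mathcal{W}_k$ of non-empty subsets of $N$ such that $M\in\mathcal{W}_k$ and $M\subseteq M'$ imply $M'\in\mathcal{W}_k$. The voting by committees $f^{\mathcal{W}}$ is defined by: $k\in f^{\mathcal{W}}(P)$ iff $\{i\in N:k\in t(P_i)\}\in\mathcal{W}_k$. A rule is dictatorial if there is $i$ with $f(P)=t(P_i)$ for all $P$. Option set $O(P_i)=\{f(P_i,P_{-i}):P_{-i}\in\mathcal{P}^{n-1}\}$. $P_i'$ is a manipulation at $P_i$ if $f(P_i',P_{-i})P_if(P_i,P_{-i})$ for some $P_{-i}$; it is obvious if the $P_i$-worst element of $O(P_i')$ is strictly $P_i$-better than that of $O(P_i)$, or the $P_i$-best element of $O(P_i')$ is strictly $P_i$-better than that of $O(P_i)$. NOM means no obvious manipulation exists. *)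

From mathcomp Require Import all_boot.
Set Implicit Arguments. Unset Strict Implicit. Unset Printing Implicit Defensive.

Section Voting.
Variable K : finType.
Variable n : nat.

Definition strict_linear_order (R : rel {set K}) : Prop :=
  irreflexive R /\ transitive R /\ (forall x y, x != y -> R x y || R y x).

Definition pref := {R : rel {set K} | strict_linear_order R}.
Definition prefR (P : pref) : rel {set K} := proj1_sig P.

(* top of P: the P-best alternative (unique, exists as {set K} is finite, nonempty) *)
Definition top (P : pref) : {set K} :=
  odflt set0 [pick x | [forall y, (y != x) ==> prefR P x y]].

Definition profile := 'I_n -> pref.

Definition upd (P : profile) (i : 'I_n) (Q : pref) : profile :=
  fun j => if j == i then Q else P j.

Definition committee (Wk : {set {set 'I_n}}) : Prop :=
  Wk != set0 /\ set0 \notin Wk /\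
  (forall M M' : {set 'I_n}, M \in Wk -> M \subset M' -> M' \in Wk).

Definition committees (W : K -> {set {set 'I_n}}) : Prop :=
  forall k, committee (W k).

Definition vbc (W : K -> {set {set 'I_n}}) (P : profile) : {set K} :=
  [set k | [set i | k \in top (P i)] \in W k].

Definition dictatorial (f : profile -> {set K}) : Prop :=
  exists i, forall P : profile, f P = top (P i).

Definition option_set (f : profile -> {set K}) (i : 'I_n) (Pi : pref)
  (x : {set K}) : Prop :=
  exists P : profile, f (upd P i Pi) = x.

Definition is_worst (R : rel {set K}) (S : {set K} -> Prop) (x : {set K}) :=
  S x /\ forall y, S y -> y != x -> R y x.
Definition is_best (R : rel {set K}) (S : {set K} -> Prop) (x : {set K}) :=
  S x /\ forall y, S y -> y != x -> R x y.

Definition manipulation (f : profile -> {set K}) (i : 'I_n) (Pi Pi' : pref) :=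
  exists P : profile, prefR Pi (f (upd P i Pi')) (f (upd P i Pi)).

Definition obvious_manipulation (f : profile -> {set K}) (i : 'I_n)
  (Pi Pi' : pref) :=
  manipulation f i Pi Pi' /\
  ((exists w w', is_worst (prefR Pi) (option_set f i Pi) w /\
                 is_worst (prefR Pi) (option_set f i Pi') w' /\
                 prefR Pi w' w) \/
   (exists b b', is_best (prefR Pi) (option_set f i Pi) b /\
                 is_best (prefR Pi) (option_set f i Pi') b' /\
                 prefR Pi b' b)).

Definition NOM (f : profile -> {set K}) : Prop :=
  forall i Pi Pi', ~ obvious_manipulation f i Pi Pi'.

End Voting.

(* Say that agent i is free at object k when {i} does not win k but N \ {i} does.
   For a committee, conditions (i) and (ii) say exactly that every agent is free
   at every object.  A free agent cannot overturn a unanimous choice of the others,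
   so each of her reports leaves every alternative attainable: all her option sets
   equal 2^K, and no report improves their best or worst element.
   Conversely, if i is not free somewhere, non-dictatorship and |K| >= 2 provide
   objects k <> j such that i is not free at k and not a dictator at j.  By her
   report alone i can force k in or veto it, and so avoid any outcome w on the
   wrong side at k.  A truthful
   preference whose bottom w differs from its top only at j, in a direction i cannot
   impose alone, yields w when the others unanimously report w.  The deviation
   that avoids w thus raises the worst element of the option set. *)

From mathcomp Require Import all_boot zify.
From Stdlib Require Import Classical.
Set Implicit Arguments. Unset Strict Implicit. Unset Printing Implicit Defensive.

Section Preferences.
Variable K : finType.

Lemma top_best (P : pref K) x : (forall y, y != x -> prefR P x y) -> top P = x.
Proof.
move=> x_best; have [irrP [trP _]] := proj2_sig P.
rewrite /top; case: pickP => [z /forallP z_best | no_best] /=.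
  apply: contraTeq isT => zx; have xz : x != z by rewrite eq_sym.
  by have := trP _ _ _ (x_best _ zx) (implyP (z_best x) xz); rewrite /prefR irrP.
by case/forallP: (negbT (no_best x)) => y; apply/implyP/x_best.
Qed.

Lemma prefR_irr (P : pref K) x : prefR P x x = false.
Proof. exact: (proj2_sig P).1. Qed.

Lemma prefR_asym (P : pref K) x y : prefR P x y -> ~~ prefR P y x.
Proof.
move=> Rxy; apply/negP => Ryx.
by have := (proj2_sig P).2.1 _ _ _ Rxy Ryx; rewrite (proj2_sig P).1.
Qed.

Definition tb_rank (t b z : {set K}) : nat :=
  if z == t then 0 else if z == b then #|{set K}|.+1 else (enum_rank z).+1.

Lemma tb_rank_inj t b : injective (tb_rank t b).
Proof.
move=> x y; rewrite /tb_rank.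
have lt_rank z : enum_rank z < #|{set K}| := ltn_ord _.
have := lt_rank x; have := lt_rank y.
case: (x =P t) => [xt|_]; case: (y =P t) => [yt|_];
case: (x =P b) => [xb|_]; case: (y =P b) => [yb|_]; subst => //; try lia.
by move=> _ _ [] /ord_inj /enum_rank_inj.
Qed.

Lemma tb_rank_slo t b : strict_linear_order (fun x y => tb_rank t b x < tb_rank t b y).
Proof.
split; first by move=> x; rewrite ltnn.
split; first by move=> y x z; apply: ltn_trans.
by move=> x y xy; rewrite -neq_ltn (inj_eq (@tb_rank_inj t b)).
Qed.

(* A preference with top [t] and, when [b != t], bottom [b]. *)
Definition pref_tb t b : pref K := exist _ _ (tb_rank_slo t b).

Lemma top_pref_tb t b : top (pref_tb t b) = t.
Proof.
by apply: top_best => y yt; rewrite /prefR /= /tb_rank eqxx (negbTE yt); case: ifP.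
Qed.

Lemma pref_tb_bottom t b y : t != b -> y != b -> prefR (pref_tb t b) y b.
Proof.
move=> tb yb; rewrite /prefR /= /tb_rank eqxx (negbTE yb) (eq_sym b) (negbTE tb).
by case: ifP => // _; rewrite ltnS ltn_ord.
Qed.

Lemma exists_worst (R : rel {set K}) (S : {set K} -> Prop) x0 :
  strict_linear_order R -> S x0 -> exists w, is_worst R S w.
Proof.
move=> [irrR [trR totR]] Sx0.
have below_ltn x y : R x y -> #|[set z | R y z]| < #|[set z | R x z]|.
  move=> Rxy; apply: proper_card; apply/properP; split.
    by apply/subsetP => z; rewrite !inE; apply: trR.
  by exists y; rewrite !inE ?irrR.
suff: forall m x, S x -> #|[set z | R x z]| < m -> exists w, is_worst R S w.
  exact: (fun H => H _ x0 Sx0 (ltnSn _)).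
elim=> [//|m IH] x Sx.
case: (classic (exists y, [/\ S y, y != x & ~~ R y x])) => [[y [Sy yx nRyx]]|none].
  have Rxy : R x y by move: (totR y x yx); rewrite (negbTE nRyx).
  by move=> ltm; apply: (IH y Sy); apply: leq_trans (below_ltn _ _ Rxy) _.
move=> _; exists x; split=> // y Sy yx; apply: contraT => nRyx.
by case: none; exists y.
Qed.

Lemma is_worst_unique (R : rel {set K}) (S S' : {set K} -> Prop) w w' :
  (forall x y, R x y -> ~~ R y x) -> (forall x, S x <-> S' x) ->
  is_worst R S w -> is_worst R S' w' -> w = w'.
Proof.
move=> asymR SS' [Sw w_worst] [S'w' w'_worst]; apply: contraTeq isT => ww'.
have Rww' : R w w' := w'_worst w (proj1 (SS' w) Sw) ww'.
have Rw'w : R w' w by apply: w_worst; [apply/SS' | rewrite eq_sym].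
by have := asymR _ _ Rww'; rewrite Rw'w.
Qed.

End Preferences.

Section Manipulation.
Variables (K : finType) (n : nat) (f : profile K n -> {set K}) (i : 'I_n).

Lemma no_obvious_manipulation_of_full_options :
  (forall Q x, option_set f i Q x) -> forall Pi Pi', ~ obvious_manipulation f i Pi Pi'.
Proof.
move=> full Pi Pi'.
have same_options x : option_set f i Pi x <-> option_set f i Pi' x.
  by split=> _; apply: full.
case=> _ [[w [w' [worst [worst' Rw'w]]]] | [b [b' [best [best' Rb'b]]]]].
  have e := is_worst_unique (@prefR_asym _ Pi) same_options worst worst'.
  by rewrite e prefR_irr in Rw'w.
(* [is_best R] is convertible to [is_worst] of the converse of [R]. *)
have Pi_asym x y : prefR Pi y x -> ~~ prefR Pi x y by apply: prefR_asym.
have e := is_worst_unique (R := fun x y => prefR Pi y x) Pi_asym same_options best best'.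
by rewrite e prefR_irr in Rb'b.
Qed.

Lemma obvious_manipulation_of_avoided_bottom Pi Pi' w P0 :
  (forall y, y != w -> prefR Pi y w) -> f (upd P0 i Pi) = w ->
  (forall P, f (upd P i Pi') != w) -> obvious_manipulation f i Pi Pi'.
Proof.
move=> w_bottom reach avoid; split; first by exists P0; rewrite reach w_bottom.
have [w' worst'] := exists_worst (proj2_sig Pi) (ex_intro _ P0 erefl : option_set f i Pi' _).
left; exists w, w'; split; first by split=> [|y _]; [exists P0 | apply: w_bottom].
by split=> //; case: worst' => [[P <-] _]; apply/w_bottom/avoid.
Qed.

End Manipulation.

Section Committees.
Variables (n : nat) (Wk : {set {set 'I_n}}).
Hypothesis committeeWk : committee Wk.

Lemma committee_setT : setT \in Wk.
Proof. by case: committeeWk => /set0Pn [M MW] [_ up]; apply: up MW (subsetT M). Qed.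

Lemma bigcap_committee_eq0 :
  \bigcap_(M in Wk) M = set0 <-> forall i, [set~ i] \in Wk.
Proof.
have [_ [_ up]] := committeeWk; split=> [cap0 i | no_veto].
  apply: contraT => nVi; have : i \in \bigcap_(M in Wk) M; last by rewrite cap0 inE.
  apply/bigcapP => M MW; apply: contraT => iM; case/negP: nVi; apply: up MW _.
  by apply/subsetP => x xM; rewrite !inE; apply: contraNneq iM => <-.
by apply/setP => i; rewrite inE; apply/bigcapP => /(_ _ (no_veto i)); rewrite !inE eqxx.
Qed.

Lemma committee_card_gt1 :
  (forall M, M \in Wk -> 2 <= #|M|) <-> forall i, [set i] \notin Wk.
Proof.
have [_ [W0 _]] := committeeWk; split=> [gt1 i | no1 M MW].
  by apply/negP => /gt1; rewrite cards1.
rewrite ltnNge leq_eqVlt ltnS leqn0 cards_eq0.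
apply/negP => /orP [/cards1P [i Mi] | /eqP M0]; move: MW.
  by rewrite Mi (negbTE (no1 i)).
by rewrite M0 (negbTE W0).
Qed.

Lemma committee_no_veto_no_singleton :
  (\bigcap_(M in Wk) M = set0 /\ forall M, M \in Wk -> 2 <= #|M|) <->
  forall i, ([set i] \notin Wk) && ([set~ i] \in Wk).
Proof.
split=> [[/bigcap_committee_eq0 no_veto /committee_card_gt1 no1] i | free].
  by rewrite no1 no_veto.
by split; [apply/bigcap_committee_eq0 | apply/committee_card_gt1] => i; case/andP: (free i).
Qed.

End Committees.

Lemma exists_distinct_pair (T : finType) (p q : pred T) k0 j0 :
  1 < #|T| -> (forall x, p x || q x) -> p k0 -> q j0 ->
  exists k j, [/\ k != j, p k & q j].
Proof.
move=> T2 pq pk0 qj0.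
have [j jk0] : exists j, j != k0.
  have /card_gt1P [x [y [_ _ xy]]] := T2.
  by case: (eqVneq x k0) => [<- | xk0]; [exists y; rewrite eq_sym | exists x].
case: (eqVneq k0 j0) qj0 => [<- qk0 | k0j0 qj0]; last by exists k0, j0.
by case/orP: (pq j) => [pj | qj]; [exists j, k0 | exists k0, j; rewrite eq_sym].
Qed.

Section VotingByCommittees.
Variables (K : finType) (n : nat) (W : K -> {set {set 'I_n}}).
Hypothesis committeesW : committees W.

Definition free_at i l := ([set i] \notin W l) && ([set~ i] \in W l).
Definition dictator_at i l := ([set i] \in W l) && ([set~ i] \notin W l).

Lemma not_free_or_not_dictator i l : ~~ free_at i l || ~~ dictator_at i l.
Proof. by rewrite -negb_and; apply/negP => /andP [/andP [/negP nY _] /andP [Y _]]. Qed.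

Lemma mem_vbc_coalition P l M :
  M \in W l -> M \subset [set j | l \in top (P j)] -> l \in vbc W P.
Proof. by move=> MW sub; rewrite inE; apply: (committeesW l).2.2 MW sub. Qed.

Lemma notin_vbc_coalition P l M :
  M \notin W l -> [set j | l \in top (P j)] \subset M -> l \notin vbc W P.
Proof. by move=> MW sub; rewrite inE; apply: contra MW => /(committeesW l).2.2; apply. Qed.

Lemma mem_vbc_forced P i l : [set i] \in W l -> l \in top (P i) -> l \in vbc W P.
Proof.
by move=> Wi li; apply: mem_vbc_coalition Wi _; apply/subsetP => j /set1P ->; rewrite inE.
Qed.

Lemma notin_vbc_vetoed P i l : [set~ i] \notin W l -> l \notin top (P i) -> l \notin vbc W P.
Proof.
move=> Wi li; apply: notin_vbc_coalition Wi _.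
by apply/subsetP => j; rewrite !inE; apply: contraTneq => ->.
Qed.

Lemma vbc_dictator i : (forall l, dictator_at i l) -> dictatorial (vbc W).
Proof.
move=> dict; exists i => P; apply/setP => l; have /andP [Yl nVl] := dict l.
case: (boolP (l \in top (P i))) => li; first by rewrite (mem_vbc_forced Yl).
by apply/negbTE; apply: notin_vbc_vetoed li.
Qed.

Definition unanimous (x : {set K}) : profile K n := fun=> pref_tb x x.

Lemma top_upd_unanimous x i Q j :
  top (upd (unanimous x) i Q j) = if j == i then top Q else x.
Proof. by rewrite /upd; case: eqP => // _; rewrite top_pref_tb. Qed.

Lemma vbc_upd_unanimous (w : {set K}) i Q :
  (forall l, l \in w -> l \notin top Q -> [set~ i] \in W l) ->
  (forall l, l \notin w -> l \in top Q -> [set i] \notin W l) ->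
  vbc W (upd (unanimous w) i Q) = w.
Proof.
move=> others_win alone_loses; apply/setP => l.
have supp j : (l \in top (upd (unanimous w) i Q j)) = if j == i then l \in top Q else l \in w.
  by rewrite top_upd_unanimous; case: ifP.
case: (boolP (l \in w)) => lw; case: (boolP (l \in top Q)) => lQ.
- apply: mem_vbc_coalition (committee_setT (committeesW l)) _.
  by apply/subsetP => j _; rewrite inE supp; case: ifP.
- apply: mem_vbc_coalition (others_win _ lw lQ) _.
  by apply/subsetP => j; rewrite !inE supp => /negbTE ->.
- apply/negbTE; apply: notin_vbc_coalition (alone_loses _ lw lQ) _.
  by apply/subsetP => j; rewrite !inE supp (negbTE lw); case: eqP.
- apply/negbTE; apply: notin_vbc_coalition (committeesW l).2.1 _.
  by apply/subsetP => j; rewrite inE supp (negbTE lw) (negbTE lQ); case: ifP.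
Qed.

Lemma option_set_vbc_full i :
  (forall l, free_at i l) -> forall Q x, option_set (vbc W) i Q x.
Proof.
move=> free Q x; exists (unanimous x).
by apply: vbc_upd_unanimous => l _ _; case/andP: (free l).
Qed.

Lemma obvious_manipulation_vbc i (t w t' : {set K}) :
  t != w ->
  (forall l, l \in w -> l \notin t -> [set~ i] \in W l) ->
  (forall l, l \notin w -> l \in t -> [set i] \notin W l) ->
  (forall P, vbc W (upd P i (pref_tb t' t')) != w) ->
  obvious_manipulation (vbc W) i (pref_tb t w) (pref_tb t' t').
Proof.
move=> tw others_win alone_loses.
apply: (obvious_manipulation_of_avoided_bottom (P0 := unanimous w)).
  by move=> y; apply: pref_tb_bottom.
by apply: vbc_upd_unanimous; rewrite top_pref_tb.
Qed.

Lemma obvious_manipulation_of_not_free i k j : k != j ->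
  ~~ free_at i k -> ~~ dictator_at i j ->
  exists Pi Pi', obvious_manipulation (vbc W) i Pi Pi'.
Proof.
rewrite /free_at /dictator_at => kj power_k free_j.
(* The deviation with top [t'] puts [k] in or keeps it out, whichever [i] can impose;
   the bottom [w] and the truthful top [t] agree with [s] at [k] and differ only at [j]. *)
have [s [t' [js avoid]]] : exists s t' : {set K}, j \notin s /\
    forall (w : {set K}) P, (k \in w) = (k \in s) -> vbc W (upd P i (pref_tb t' t')) != w.
  case: (boolP ([set i] \in W k)) power_k => [Yk _ | _ /= nVk].
  + exists set0, [set k]; split=> [|w P]; rewrite inE // => kw.
    apply: contraFneq kw => <-; apply: mem_vbc_forced Yk _.
    by rewrite /upd eqxx top_pref_tb set11.
  + exists [set k], set0; split=> [|w P]; first by rewrite inE eq_sym.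
    rewrite inE eqxx => kw.
    apply: contraTneq kw => <-; apply: notin_vbc_vetoed nVk _.
    by rewrite /upd eqxx top_pref_tb inE.
case: (boolP ([set~ i] \in W j)) free_j => [Vj _ | nVj]; last rewrite andbT => nYj.
- exists (pref_tb s (j |: s)), (pref_tb t' t'); apply: obvious_manipulation_vbc.
  + by apply/eqP => /setP /(_ j); rewrite !inE eqxx (negbTE js).
  + by move=> l; rewrite in_setU1 => /orP [/eqP -> | ls /negP].
  + by move=> l; rewrite in_setU1 negb_or => /andP [_ /negPf ->].
  + by move=> P; apply: (avoid (j |: s)); rewrite in_setU1 (negbTE kj).
- exists (pref_tb (j |: s) s), (pref_tb t' t'); apply: obvious_manipulation_vbc.
  + by apply/eqP => /setP /(_ j); rewrite !inE eqxx (negbTE js).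
  + by move=> l ls; rewrite in_setU1 ls orbT.
  + by move=> l ls; rewrite in_setU1 (negbTE ls) orbF => /eqP ->.
  + by move=> P; apply: avoid.
Qed.

End VotingByCommittees.

Theorem theorem4 (K : finType) (n : nat) (W : K -> {set {set 'I_n}}) :
  2 <= #|K| -> 2 <= n -> committees W -> ~ dictatorial (vbc W) ->
  (NOM (vbc W) <->
   forall k : K, (\bigcap_(M in W k) M = set0) /\
                 (forall M, M \in W k -> 2 <= #|M|)).
Proof.
move=> K2 _ cW not_dict; split=> [nom k | conditions i].
  apply/(committee_no_veto_no_singleton (cW k)) => i; apply: contraT => not_free.
  have /existsP [j not_dict_j] : [exists j, ~~ dictator_at W i j].
    apply: contraT; rewrite negb_exists => /forallP dict; case: not_dict.
    by apply: (vbc_dictator cW (i := i)) => l; move: (dict l); rewrite negbK.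
  have [k' [j' [kj not_free' not_dict']]] :=
    exists_distinct_pair K2 (@not_free_or_not_dictator _ _ W i) not_free not_dict_j.
  have [Pi [Pi' manipulable]] := obvious_manipulation_of_not_free cW kj not_free' not_dict'.
  by case: (nom _ _ _ manipulable).
apply: no_obvious_manipulation_of_full_options; apply: option_set_vbc_full => // l.
exact: (committee_no_veto_no_singleton (cW l)).1 (conditions l) i.
Qed.
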